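(* Let $T$ be a triangle and $n$ a positive integer. Then there exists $\varepsilon_0>0$ such that for every $0<\varepsilon<\varepsilon_0$ there exists a point set $P\subseteq\mathbb{R}^2$ with $|P|\le 20$ such that $\mathcal{H}(T,P,\varepsilon)$ has complete shadow graph and $$h(n,T)\le n^3\,\lambda(\mathcal{H}(T,P,\varepsilon)).$$
   Context: For a triangle $T$ with side lengths $a,b,c$ and $\varepsilon>0$, with $\varepsilon'=\varepsilon\min\{a,b,c\}$, a triangle $A'B'C'$ is $\varepsilon$-congruent to $T$ if there are $A,B,C\in\mathbb{R}^2$ with $ABC$ congruent to $T$ and $A',B',C'$ within distance $\varepsilon'$ of $A,B,C$ respectively. $h(n,T,\varepsilon)$ is the maximum over $n$-point sets $P\subseteq\mathbb{R}^2$ of the number of 3-subsets of $P$ forming triangles $\varepsilon$-congruent to $T$, and $h(n,T)=\min_{\varepsilon>0}h(n,T,\varepsilon)$. For finite $P$, $\mathcal{H}(T,P,\varepsilon)$ is the 3-uniform hypergraph on $P$ whose edges are the triples forming triangles $\varepsilon$-congruent to $T$. The shadow graph of a 3-graph $H$ is the graph on $V(H)$ whose edges are the pairs contained in some edge of $H$; it is complete if all pairs are edges. For a 3-graph $H$ on vertices $1,\dots,m$, its Lagrangian is $\lambda(H)=\max\{\sum_{ijk\in E(H)}x_ix_jx_k : x\in[0,1]^m,\ x_1+\dots+x_m=1\}$. *)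

From HB Require Import structures.
From mathcomp Require Import all_boot all_order all_algebra.
From mathcomp Require Import boolp classical_sets reals.
Set Implicit Arguments. Unset Strict Implicit. Unset Printing Implicit Defensive.
Import Order.TTheory GRing.Theory Num.Theory.
Local Open Scope ring_scope.
Local Open Scope classical_set_scope.

Section Defs.
Variable R : realType.

Definition pt := (R * R)%type.

Definition dist (p q : pt) : R :=
  Num.sqrt ((p.1 - q.1) ^+ 2 + (p.2 - q.2) ^+ 2).

Definition is_triangle (a b c : R) : Prop :=
  [/\ 0 < a, 0 < b, 0 < c & [/\ a < b + c, b < a + c & c < a + b]].

Definition congruent (a b c : R) (A B C : pt) : Prop :=
  perm_eq [:: dist B C; dist C A; dist A B] [:: a; b; c].

Definition eps_congruent (a b c eps : R) (A' B' C' : pt) : Prop :=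
  let eps' := eps * Num.min a (Num.min b c) in
  exists A B C : pt, congruent a b c A B C /\
    dist A' A <= eps' /\ dist B' B <= eps' /\ dist C' C <= eps'.

(* The hypergraph H(T,P,eps) on a point set P given by an injective
   indexing P : 'I_m -> pt; {i,j,k} is an edge iff i,j,k are distinct and
   P i, P j, P k form a triangle eps-congruent to T. *)
Definition Hedge (a b c eps : R) (m : nat) (P : 'I_m -> pt) (i j k : 'I_m) : Prop :=
  [/\ i != j, j != k, i != k & eps_congruent a b c eps (P i) (P j) (P k)].

Definition count_cong (a b c eps : R) (m : nat) (P : 'I_m -> pt) : nat :=
  #|[set t : 'I_m * 'I_m * 'I_m |
       ((t.1.1 < t.1.2)%N && (t.1.2 < t.2)%N) &&
       `[< Hedge a b c eps P t.1.1 t.1.2 t.2 >] ]|.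

(* h(n,T,eps): maximum over n-point sets P of count_cong (as a sup of a
   bounded nonempty set of naturals, hence a maximum). *)
Definition h_eps (n : nat) (a b c eps : R) : R :=
  sup [set (count_cong a b c eps P)%:R | P in [set P : 'I_n -> pt | injective P]].

(* h(n,T) = min over eps > 0 of h(n,T,eps) (an inf of a set of naturals). *)
Definition h_T (n : nat) (a b c : R) : R :=
  inf [set h_eps n a b c eps | eps in [set e : R | 0 < e]].

Definition shadow_complete (a b c eps : R) (m : nat) (P : 'I_m -> pt) : Prop :=
  forall i j : 'I_m, i != j -> exists k : 'I_m, Hedge a b c eps P i j k.

Definition lagrangian (a b c eps : R) (m : nat) (P : 'I_m -> pt) : R :=
  sup [set (\sum_(t : 'I_m * 'I_m * 'I_m |
              ((t.1.1 < t.1.2)%N && (t.1.2 < t.2)%N) &&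
              `[< Hedge a b c eps P t.1.1 t.1.2 t.2 >])
              x t.1.1 * x t.1.2 * x t.2)
       | x in [set x : 'I_m -> R | (forall i, 0 <= x i <= 1) /\
                                    \sum_(i < m) x i = 1]].

End Defs.

From HB Require Import structures.
From mathcomp Require Import all_boot all_order all_algebra.
From mathcomp Require Import boolp classical_sets reals.
From mathcomp Require Import ring lra.
Set Implicit Arguments. Unset Strict Implicit. Unset Printing Implicit Defensive.
Import Order.TTheory GRing.Theory Num.Theory.
Local Open Scope ring_scope.

(* Take an n-point set Q attaining h(n,T,eps): its number of eps-congruent
   triples is n^3 times the Lagrangian polynomial of H(T,Q,eps) at the uniform
   weighting.  As in the Motzkin-Straus argument, moving weight between two
   weighted vertices u, v that lie in no edge with a third weighted vertex
   changes the polynomial affinely, so weight can be shifted without loss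
   until every pair of weighted vertices lies in an edge with a weighted third
   vertex.  The weighted points then form a set P whose hypergraph has
   complete shadow and whose Lagrangian is at least h(n,T,eps)/n^3.  All
   distances in P are close to sides of T; fixing two points p, q of P, every
   other point is determined, for eps small, by which sides its distances to
   p and q approximate and by the side of the line pq it lies on, whence
   |P| <= 2 + 3 * 3 * 2 = 20. *)

Section LagrangianPolynomial.
Variables (R : realFieldType) (n : nat) (E : 'I_n -> 'I_n -> 'I_n -> Prop).
Implicit Types x y : 'I_n -> R.

Definition is_edge (t : 'I_n * 'I_n * 'I_n) : bool :=
  ((t.1.1 < t.1.2)%N && (t.1.2 < t.2)%N) && `[< E t.1.1 t.1.2 t.2 >].

Definition lagpoly x : R := \sum_(t | is_edge t) x t.1.1 * x t.1.2 * x t.2.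

Definition in_simplex x := (forall i, 0 <= x i) /\ \sum_i x i = 1.

Definition supp x : {set 'I_n} := [set i | x i != 0].

Definition closed_support x :=
  forall u v, x u != 0 -> x v != 0 -> u != v -> exists2 k, x k != 0 & E u v k.

Lemma in_simplex_le1 x i : in_simplex x -> x i <= 1.
Proof.
by case=> x_ge0 <-; rewrite (bigD1 i) //= lerDl sumr_ge0.
Qed.

Lemma uniform_in_simplex : (0 < n)%N -> in_simplex (fun=> n%:R^-1).
Proof.
move=> n_gt0; split=> [i|]; first by rewrite invr_ge0 ler0n.
by rewrite sumr_const card_ord -[_ *+ n]mulr_natr mulVf // pnatr_eq0 -lt0n.
Qed.

Lemma lagpoly_uniform : (0 < n)%N ->
  n%:R ^+ 3 * lagpoly (fun=> n%:R^-1) = #|[set t | is_edge t]|%:R.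
Proof.
move=> n_gt0; rewrite /lagpoly (eq_bigr (fun=> n%:R^-3)) => [|t _]; last first.
  by rewrite -exprVn !exprS expr0 mulr1 mulrA.
rewrite sumr_const mulrnAr mulfV ?expf_neq0 ?pnatr_eq0 -?lt0n //.
by congr _%:R; apply: eq_card => t; rewrite inE.
Qed.

Lemma lagpoly_le_edges x : (forall i, 0 <= x i <= 1) ->
  lagpoly x <= \sum_(t | is_edge t) 1.
Proof.
move=> x01; apply: ler_sum => t _.
have /andP [x1_ge0 x1_le1] := x01 t.1.1; have /andP [x2_ge0 x2_le1] := x01 t.1.2.
have /andP [x3_ge0 x3_le1] := x01 t.2.
by rewrite mulr_ile1 ?mulr_ge0 ?mulr_ile1.
Qed.

Hypothesis E_swap12 : forall i j k, E i j k -> E j i k.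
Hypothesis E_swap23 : forall i j k, E i j k -> E i k j.

Section Transfer.
Variables (u v : 'I_n) (x : 'I_n -> R).
Hypothesis neq_uv : u != v.
Hypothesis x_uv_free : forall k, E u v k -> x k = 0.

Definition transfer (i : 'I_n) : R := (i == u)%:R - (i == v)%:R.

Lemma transfer_u : transfer u = 1.
Proof. by rewrite /transfer eqxx (negPf neq_uv) subr0. Qed.

Lemma transfer_v : transfer v = -1.
Proof. by rewrite /transfer eqxx eq_sym (negPf neq_uv) sub0r. Qed.

Lemma transfer_other i : i != u -> i != v -> transfer i = 0.
Proof. by move=> /negPf iu /negPf iv; rewrite /transfer iu iv subr0. Qed.

Lemma transfer_neq0 i : transfer i != 0 -> (i == u) || (i == v).
Proof. by apply: contraR => /norP [iu iv]; rewrite transfer_other. Qed.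

Lemma sum_transfer : \sum_i transfer i = 0.
Proof.
have sum_indicator w : \sum_i ((i == w)%:R : R) = 1.
  by rewrite (bigD1 w) //= eqxx big1 ?addr0 // => i /negPf->.
by rewrite sumrB !sum_indicator subrr.
Qed.

Lemma transfer_pair_edge i j k : i != j -> E i j k ->
  transfer i * transfer j * x k = 0.
Proof.
have [->|/transfer_neq0 iuv] := eqVneq (transfer i) 0; first by rewrite !mul0r.
have [->|/transfer_neq0 juv] := eqVneq (transfer j) 0; first by rewrite mulr0 mul0r.
case/orP: iuv => /eqP->; case/orP: juv => /eqP->; rewrite ?eqxx // => _ e.
  by rewrite x_uv_free ?mulr0.
by rewrite x_uv_free ?mulr0 //; apply: E_swap12.
Qed.

Lemma transfer_triple i j k : i != j -> j != k -> i != k ->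
  transfer i * transfer j * transfer k = 0.
Proof.
have [->|/transfer_neq0 iuv] := eqVneq (transfer i) 0; first by rewrite !mul0r.
have [->|/transfer_neq0 juv] := eqVneq (transfer j) 0; first by rewrite mulr0 mul0r.
have [->|/transfer_neq0 kuv] := eqVneq (transfer k) 0; first by rewrite mulr0.
by case/orP: iuv => /eqP->; case/orP: juv => /eqP->; case/orP: kuv => /eqP->;
  rewrite ?eqxx.
Qed.

(* Every edge meets {u, v} in at most one vertex unless its third vertex has
   weight 0, so all terms of degree at least 2 in s cancel. *)
Lemma lagpoly_transfer_affine : exists g, forall s,
  lagpoly (fun i => x i + s * transfer i) = lagpoly x + s * g.
Proof.
pose d := transfer.
exists (\sum_(t | is_edge t) (d t.1.1 * x t.1.2 * x t.2
          + x t.1.1 * d t.1.2 * x t.2 + x t.1.1 * x t.1.2 * d t.2)) => s.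
have expand (x1 x2 x3 d1 d2 d3 : R) :
    (x1 + s * d1) * (x2 + s * d2) * (x3 + s * d3) = x1 * x2 * x3
    + s * (d1 * x2 * x3 + x1 * d2 * x3 + x1 * x2 * d3)
    + s ^+ 2 * (d1 * d2 * x3 + d1 * d3 * x2 + d2 * d3 * x1)
    + s ^+ 3 * (d1 * d2 * d3) by ring.
rewrite /lagpoly mulr_sumr -big_split; apply: eq_bigr => -[[i j] k] /=.
case/andP=> /andP [ij jk] /asboolP e.
have neq_ij : i != j by rewrite -val_eqE neq_ltn ij.
have neq_jk : j != k by rewrite -val_eqE neq_ltn jk.
have neq_ik : i != k by rewrite -val_eqE neq_ltn (ltn_trans ij jk).
rewrite expand (transfer_pair_edge neq_ij e) (transfer_pair_edge neq_ik (E_swap23 e)).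
rewrite (transfer_pair_edge neq_jk (E_swap23 (E_swap12 e))).
by rewrite transfer_triple // !(addr0, mulr0).
Qed.

End Transfer.

Lemma lagpoly_shrink_support x : in_simplex x -> ~ closed_support x ->
  exists y, [/\ in_simplex y, lagpoly x <= lagpoly y & (#|supp y| < #|supp x|)%N].
Proof.
move=> [x_ge0 sum_x] /existsNP [u /existsNP [v]].
move=> /not_implyP [xu /not_implyP [xv /not_implyP [uv no_edge]]].
have free k : E u v k -> x k = 0.
  by move=> e; apply/eqP; apply: contra_notT no_edge => xk; exists k.
have [g lagpoly_g] := lagpoly_transfer_affine free.
pose y s i := x i + s * transfer u v i.
(* For -x u <= s <= x v, y s stays in the simplex; an endpoint with s * g >= 0
   does not decrease lagpoly and removes u or v from the support. *)
suff shift s w : w \in [:: u; v] -> - x u <= s <= x v -> 0 <= s * g -> y s w = 0 ->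
    exists y, [/\ in_simplex y, lagpoly x <= lagpoly y & (#|supp y| < #|supp x|)%N].
  have xu_ge0 := x_ge0 u; have xv_ge0 := x_ge0 v.
  have [g_ge0|g_lt0] := lerP 0 g.
    apply: (shift (x v) v); rewrite ?inE ?eqxx ?orbT ?mulr_ge0 ?lexx ?andbT //.
      lra.
    by rewrite /y transfer_v // mulrN1 subrr.
  apply: (shift (- x u) u); rewrite ?inE ?eqxx ?lexx //=.
  - lra.
  - by rewrite mulNr oppr_ge0 mulr_ge0_le0 // ltW.
  - by rewrite /y transfer_u // mulr1 subrr.
move=> w_uv /andP [s_ge s_le] sg_ge0 yw0; exists (y s); split.
- split=> [i|]; last by rewrite big_split /= -mulr_sumr sum_transfer // mulr0 addr0.
  have [->|iu] := eqVneq i u; first by rewrite /y transfer_u // mulr1 -lerBlDl sub0r.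
  have [->|iv] := eqVneq i v; first by rewrite /y transfer_v // mulrN1 subr_ge0.
  by rewrite /y transfer_other // mulr0 addr0.
- by rewrite /y lagpoly_g lerDl.
apply: proper_card; apply/properP; split.
  apply/fintype.subsetP => i; rewrite !inE; apply: contra_neq => xi0.
  have [ei|iu] := eqVneq i u; first by rewrite -ei xi0 eqxx in xu.
  have [ei|iv] := eqVneq i v; first by rewrite -ei xi0 eqxx in xv.
  by rewrite /y transfer_other // mulr0 addr0.
exists w; rewrite !inE ?negbK; last exact/eqP.
by move: w_uv; rewrite !inE => /orP [] /eqP->.
Qed.

Lemma exists_closed_support x : in_simplex x ->
  exists y, [/\ in_simplex y, lagpoly x <= lagpoly y & closed_support y].
Proof.
have [N] : exists N, (#|supp x| <= N)%N by exists #|supp x|.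
elim: N x => [|N IH] x le_xN x_simplex;
  have [closed_x|] := pselect (closed_support x); try by exists x.
all: move=> /(lagpoly_shrink_support x_simplex) [y [y_simplex le_xy lt_yx]].
  by have := leq_trans lt_yx le_xN.
have [z [z_simplex le_yz closed_z]] := IH y (leq_trans lt_yx le_xN) y_simplex.
by exists z; split=> //; apply: le_trans le_yz.
Qed.

End LagrangianPolynomial.

Lemma sum_inj_support (V : nmodType) (I J : finType) (h : I -> J)
    (P : pred J) (F : J -> V) :
  injective h -> (forall j, P j -> F j != 0 -> exists i, j = h i) ->
  \sum_(i | P (h i)) F (h i) = \sum_(j | P j) F j.
Proof.
move=> h_inj F_supp; pose H := [set h i | i : I].
rewrite (bigID (mem H) P) /= [X in _ = _ + X]big1 ?addr0 => [|j /andP [Pj]].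
  under [RHS]eq_bigl => j do rewrite andbC.
  by rewrite big_imset_cond // => i i' _ _ /h_inj.
move=> notH; apply/eqP; apply: contraR notH => /(F_supp j Pj) [i ->].
by rewrite imset_f.
Qed.

Lemma enum_val_ltn_mono n (S : {set 'I_n}) :
  {mono (fun i : 'I_#|S| => enum_val i) : i j / (i < j)%N}.
Proof.
have sorted_S : sorted ltn (map val (enum S)).
  rewrite -[enum _](eq_filter (mem_enum _)) -(eq_filter (mem_map val_inj _)).
  by rewrite -filter_map (sorted_filter ltn_trans) // unlock val_ord_enum iota_ltn_sorted.
have homo : {homo (fun i : 'I_#|S| => enum_val i) : i j / (i < j)%N}.
  move=> i j ij; have in_size (k : 'I_#|S|) : (k : nat) \in [pred k | (k < size (map val (enum S)))%N].
    by rewrite inE size_map -cardE.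
  have := sorted_ltn_nth ltn_trans 0 sorted_S i j (in_size i) (in_size j) ij.
  by rewrite !(nth_map (enum_val i)) -?cardE // -!enum_val_nth.
move=> i j; apply/idP/idP => [|/homo //].
by case: (ltngtP i j) => // [/homo /ltn_trans h /h|/val_inj->]; rewrite ltnn.
Qed.

Section Reindex.
Variables (R : realFieldType) (m n : nat) (f : 'I_m -> 'I_n).
Variables (E : 'I_n -> 'I_n -> 'I_n -> Prop) (E' : 'I_m -> 'I_m -> 'I_m -> Prop).
Hypothesis f_mono : {mono f : i j / (i < j)%N}.
Hypothesis E'_iff : forall i j k, E' i j k <-> E (f i) (f j) (f k).
Variable x : 'I_n -> R.
Hypothesis x_supp : forall j, x j != 0 -> exists i, j = f i.

Let f_inj : injective f.
Proof.
move=> i j eq_f; have := f_mono i j; have := f_mono j i.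
rewrite eq_f ltnn => /esym ji /esym ij; apply: val_inj; apply/eqP.
by rewrite eqn_leq leqNgt ji leqNgt ij.
Qed.

Lemma lagpoly_reindex : lagpoly E' (x \o f) = lagpoly E x.
Proof.
pose f3 (t : 'I_m * 'I_m * 'I_m) := (f t.1.1, f t.1.2, f t.2).
have f3_inj : injective f3 by move=> [[? ?] ?] [[? ?] ?] [] /f_inj-> /f_inj-> /f_inj->.
rewrite /lagpoly -(sum_inj_support (h := f3)) //; last first.
  move=> [[i j] k] _ /=; rewrite !mulf_eq0 !negb_or => /andP [/andP [xi xj] xk].
  case: (x_supp xi) (x_supp xj) (x_supp xk) => [i' ->] [j' ->] [k' ->].
  by exists (i', j', k').
apply: eq_bigl => t; rewrite /is_edge /= !f_mono; congr andb.
by apply/asboolP/asboolP => /E'_iff.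
Qed.

Lemma sum_reindex : \sum_i x (f i) = \sum_j x j.
Proof.
by rewrite -(sum_inj_support (h := f) (P := predT)) // => j _ /x_supp.
Qed.

End Reindex.

Section PlaneGeometry.
Variable R : realType.
Implicit Types p q r : pt R.

Lemma dist_sym p q : dist p q = dist q p.
Proof. by rewrite /dist; congr Num.sqrt; ring. Qed.

Lemma dist_ge0 p q : 0 <= dist p q.
Proof. exact: sqrtr_ge0. Qed.

Lemma sqr_dist p q : dist p q ^+ 2 = (p.1 - q.1) ^+ 2 + (p.2 - q.2) ^+ 2.
Proof. by rewrite /dist sqr_sqrtr // addr_ge0 ?sqr_ge0. Qed.

Lemma dist_triangle p q r : dist p r <= dist p q + dist q r.
Proof.
have le_of_sqr (s t : R) : 0 <= t -> s ^+ 2 <= t ^+ 2 -> s <= t by move=> *; nra.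
pose dot := (p.1 - q.1) * (q.1 - r.1) + (p.2 - q.2) * (q.2 - r.2).
have cauchy_schwarz : dot <= dist p q * dist q r.
  apply: le_of_sqr; first by rewrite mulr_ge0 ?dist_ge0.
  rewrite exprMn !sqr_dist /dot.
  have := sqr_ge0 ((p.1 - q.1) * (q.2 - r.2) - (p.2 - q.2) * (q.1 - r.1)); nra.
have sqr_pr : dist p r ^+ 2 = dist p q ^+ 2 + dist q r ^+ 2 + 2 * dot.
  by rewrite !sqr_dist /dot; ring.
apply: le_of_sqr; first by rewrite addr_ge0 ?dist_ge0.
by rewrite sqr_pr sqrrD; lra.
Qed.

Lemma dist_sub_le p q p' q' : `|dist p q - dist p' q'| <= dist p p' + dist q q'.
Proof.
have := dist_triangle p p' q; have := dist_triangle p' q' q.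
have := dist_triangle p' p q'; have := dist_triangle p q q'.
rewrite (dist_sym q' q) (dist_sym p' p) ler_norml; lra.
Qed.

End PlaneGeometry.

Section Sides.
Variable R : realDomainType.

Definition shortest_side (a b c : R) := Num.min a (Num.min b c).
Definition longest_side (a b c : R) := Num.max a (Num.max b c).

Definition near_side (a b c t d : R) :=
  exists2 s, s \in [:: a; b; c] & `|d - s| <= t.

Lemma side_bounds a b c s : s \in [:: a; b; c] ->
  shortest_side a b c <= s <= longest_side a b c.
Proof.
rewrite /shortest_side /longest_side !inE.
by case/or3P=> /eqP->; rewrite ge_min le_max ?ge_min ?le_max lexx ?orbT.
Qed.

Lemma shortest_le_longest a b c : shortest_side a b c <= longest_side a b c.
Proof. by have /andP [] := side_bounds (mem_head a [:: b; c]); apply: le_trans. Qed.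

Definition side_class (a b c t d : R) : 'I_3 :=
  odflt ord0 [pick k : 'I_3 | `|d - [:: a; b; c]`_k| <= t].

Lemma side_classP a b c t d : near_side a b c t d ->
  `|d - [:: a; b; c]`_(side_class a b c t d)| <= t.
Proof.
case=> s s_abc ds; rewrite /side_class; case: pickP => [k //|none].
move: s_abc; rewrite !inE => /or3P [] /eqP s_eq; rewrite s_eq in ds.
- by have := none (@Ordinal 3 0 isT); rewrite /= ds.
- by have := none (@Ordinal 3 1 isT); rewrite /= ds.
- by have := none (@Ordinal 3 2 isT); rewrite /= ds.
Qed.

End Sides.

Section Congruence.
Variables (R : realType) (a b c eps : R).

Lemma congruent_swap12 A B C : congruent a b c A B C -> congruent a b c B A C.
Proof.
apply: perm_trans; rewrite (dist_sym A C) (dist_sym C B) (dist_sym B A).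
by rewrite (perm_catCA [:: dist C A] [:: dist B C] [:: dist A B]).
Qed.

Lemma congruent_swap23 A B C : congruent a b c A B C -> congruent a b c A C B.
Proof.
apply: perm_trans; rewrite (dist_sym C B) (dist_sym B A) (dist_sym A C) perm_cons.
by rewrite (perm_catC [:: dist A B] [:: dist C A]).
Qed.

Lemma eps_congruent_swap12 A B C :
  eps_congruent a b c eps A B C -> eps_congruent a b c eps B A C.
Proof.
by case=> [X [Y [Z [/congruent_swap12 h [hX [hY hZ]]]]]]; exists Y, X, Z.
Qed.

Lemma eps_congruent_swap23 A B C :
  eps_congruent a b c eps A B C -> eps_congruent a b c eps A C B.
Proof.
by case=> [X [Y [Z [/congruent_swap23 h [hX [hY hZ]]]]]]; exists X, Z, Y.
Qed.

Lemma eps_congruent_near_side A B C : eps_congruent a b c eps A B C ->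
  near_side a b c (2 * (eps * shortest_side a b c)) (dist A B).
Proof.
case=> [X [Y [Z [h [hX [hY _]]]]]]; exists (dist X Y).
  by rewrite -(perm_mem h) !inE eqxx !orbT.
apply: le_trans (dist_sub_le A B X Y) _; rewrite /shortest_side; lra.
Qed.

Variables (m : nat) (P : 'I_m -> pt R).

Lemma Hedge_swap12 i j k : Hedge a b c eps P i j k -> Hedge a b c eps P j i k.
Proof. by case=> ij jk ik /eps_congruent_swap12 h; split; rewrite // eq_sym. Qed.

Lemma Hedge_swap23 i j k : Hedge a b c eps P i j k -> Hedge a b c eps P i k j.
Proof. by case=> ij jk ik /eps_congruent_swap23 h; split; rewrite // eq_sym. Qed.

Lemma shadow_complete_near_side i j : shadow_complete a b c eps P -> i != j ->
  near_side a b c (2 * (eps * shortest_side a b c)) (dist (P i) (P j)).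
Proof. by move=> shadow /shadow [k [_ _ _ /eps_congruent_near_side]]. Qed.

End Congruence.

Section Restriction.
Variables (R : realType) (a b c eps : R).

Lemma lagpoly_le_lagrangian m (P : 'I_m -> pt R) x : in_simplex x ->
  lagpoly (Hedge a b c eps P) x <= lagrangian a b c eps P.
Proof.
move=> x_simplex; apply: ub_le_sup; last first.
  exists x => //; split; last by case: x_simplex.
  by move=> i; rewrite in_simplex_le1 // andbT; case: x_simplex.
exists (\sum_(t | is_edge (Hedge a b c eps P) t) 1) => _ [y [y01 _] <-].
exact: lagpoly_le_edges.
Qed.

Lemma restrict_to_support n (Q : 'I_n -> pt R) y : injective Q -> in_simplex y ->
  closed_support (Hedge a b c eps Q) y ->
  exists m (P : 'I_m -> pt R), [/\ injective P, shadow_complete a b c eps P &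
    lagpoly (Hedge a b c eps Q) y <= lagrangian a b c eps P].
Proof.
move=> Q_inj [y_ge0 sum_y] y_closed.
pose S := supp y; pose f (i : 'I_#|S|) := enum_val i.
have f_mono : {mono f : i j / (i < j)%N} := @enum_val_ltn_mono _ S.
have f_inj : injective f := @enum_val_inj _ _.
have yf_neq0 i : y (f i) != 0 by have := enum_valP i; rewrite inE.
have f_onto j : y j != 0 -> exists i, j = f i.
  move=> yj; have jS : j \in S by rewrite inE.
  by exists (enum_rank_in jS j); rewrite /f enum_rankK_in.
have Hedge_f i j k :
    Hedge a b c eps (Q \o f) i j k <-> Hedge a b c eps Q (f i) (f j) (f k).
  by rewrite /Hedge /= !(inj_eq f_inj).
exists #|S|, (Q \o f); split.
- by move=> i j /Q_inj /f_inj.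
- move=> i j ij; have fij : f i != f j by rewrite (inj_eq f_inj).
  have [k yk e] := y_closed _ _ (yf_neq0 i) (yf_neq0 j) fij.
  by have [k' ek] := f_onto k yk; exists k'; apply/Hedge_f; rewrite -ek.
rewrite -(lagpoly_reindex f_mono Hedge_f f_onto); apply: lagpoly_le_lagrangian.
by split=> [i|]; [exact: y_ge0 | rewrite (sum_reindex f_mono f_onto)].
Qed.

End Restriction.

Section Estimates.
Variable R : realFieldType.

Lemma sqr_sub_le_norm (w w' : R) : 0 <= w * w' -> (w - w') ^+ 2 <= `|w ^+ 2 - w' ^+ 2|.
Proof. by move=> ww'; have [le|le] := lerP (w' ^+ 2) (w ^+ 2); nra. Qed.

Lemma same_sign_mul_ge0 (w w' : R) : (0 <= w) = (0 <= w') -> 0 <= w * w'.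
Proof.
case: (lerP 0 w) => w0; case: (lerP 0 w') => w'0 // _; first exact: mulr_ge0.
by rewrite ltW // nmulr_rgt0.
Qed.

Lemma sqr_close (d d' s t K : R) : 0 <= d -> 0 <= d' -> d <= K -> d' <= K ->
  `|d - s| <= t -> `|d' - s| <= t -> `|d ^+ 2 - d' ^+ 2| <= 4 * t * K.
Proof.
move=> d_ge0 d'_ge0 dK d'K; rewrite !ler_norml => /andP [ds1 ds2] /andP [d's1 d's2].
by apply/andP; split; nra.
Qed.

(* With u = q - p, v = x - p and z = x' - p: the two distance conditions pin
   down the dot products u.v and u.z, hence also the squares of the cross
   products, and the orientation condition fixes the sign of the latter. *)
Lemma vector_separation (u1 u2 v1 v2 z1 z2 eta K : R) :
  `|(v1 ^+ 2 + v2 ^+ 2) - (z1 ^+ 2 + z2 ^+ 2)| <= eta ->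
  `|((v1 - u1) ^+ 2 + (v2 - u2) ^+ 2) - ((z1 - u1) ^+ 2 + (z2 - u2) ^+ 2)| <= eta ->
  u1 ^+ 2 + u2 ^+ 2 <= K ^+ 2 -> v1 ^+ 2 + v2 ^+ 2 <= K ^+ 2 ->
  z1 ^+ 2 + z2 ^+ 2 <= K ^+ 2 ->
  0 <= (u1 * v2 - u2 * v1) * (u1 * z2 - u2 * z1) ->
  (u1 ^+ 2 + u2 ^+ 2) * ((v1 - z1) ^+ 2 + (v2 - z2) ^+ 2) <= eta ^+ 2 + 3 * K ^+ 2 * eta.
Proof.
set D := u1 ^+ 2 + u2 ^+ 2; set V := v1 ^+ 2 + v2 ^+ 2; set Z := z1 ^+ 2 + z2 ^+ 2.
set t := u1 * v1 + u2 * v2; set t' := u1 * z1 + u2 * z2.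
set w := u1 * v2 - u2 * v1; set w' := u1 * z2 - u2 * z1.
move=> VZ_close VZu_close DK VK ZK ww'_ge0.
have D_ge0 : 0 <= D by rewrite addr_ge0 ?sqr_ge0.
have lagrangeV : D * V = t ^+ 2 + w ^+ 2 by rewrite /D /V /t /w; ring.
have lagrangeZ : D * Z = t' ^+ 2 + w' ^+ 2 by rewrite /D /Z /t' /w'; ring.
have lagrangeVZ : D * ((v1 - z1) ^+ 2 + (v2 - z2) ^+ 2) = (t - t') ^+ 2 + (w - w') ^+ 2.
  by rewrite /D /t /t' /w /w'; ring.
have norm_le_of_sqr (s k : R) : 0 <= k -> s ^+ 2 <= k ^+ 2 -> `|s| <= k.
  by move=> k_ge0 sk; rewrite -(ler_pXn2r (n := 2)) ?nnegrE // real_normK ?num_real.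
have dot_close : `|t - t'| <= eta.
  move: VZ_close VZu_close; rewrite !ler_norml => /andP [? ?] /andP [? ?].
  have -> : t - t' = ((V - Z) - (((v1 - u1) ^+ 2 + (v2 - u2) ^+ 2)
                      - ((z1 - u1) ^+ 2 + (z2 - u2) ^+ 2))) / 2.
    by rewrite /t /t' /V /Z; field.
  by apply/andP; split; lra.
have K2_ge0 : 0 <= K ^+ 2 := sqr_ge0 K.
have t_le : `|t| <= K ^+ 2.
  by apply: norm_le_of_sqr; nra.
have t'_le : `|t'| <= K ^+ 2.
  by apply: norm_le_of_sqr; nra.
have cross_close : `|w ^+ 2 - w' ^+ 2| <= 3 * K ^+ 2 * eta.
  have -> : w ^+ 2 - w' ^+ 2 = D * (V - Z) - (t - t') * (t + t').
    by rewrite /w /w' /D /V /Z /t /t'; ring.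
  apply: le_trans (ler_normB _ _) _; rewrite !normrM (ger0_norm D_ge0).
  have : D * `|V - Z| <= K ^+ 2 * eta by rewrite ler_pM.
  have : `|t - t'| * `|t + t'| <= eta * (2 * K ^+ 2).
    by rewrite ler_pM // (le_trans (ler_normD _ _)) //; lra.
  nra.
have := sqr_sub_le_norm ww'_ge0.
have : (t - t') ^+ 2 <= eta ^+ 2.
  by rewrite -real_normK ?num_real // ler_pXn2r ?nnegrE // (le_trans _ dot_close).
rewrite lagrangeVZ; lra.
Qed.
End Estimates.

Lemma tolerance_le (R : realFieldType) (lo hi t : R) : 0 < lo -> lo <= hi ->
  2000 * t * hi ^+ 3 < lo ^+ 4 -> 2000 * t <= lo.
Proof.
move=> lo_gt0 lo_le_hi t_small; have hi_gt0 : 0 < hi := lt_le_trans lo_gt0 lo_le_hi.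
have : lo ^+ 4 <= lo * hi ^+ 3 by rewrite [lo ^+ 4]exprS ler_pM2l // lerXn2r // nnegrE ltW.
move/(lt_le_trans t_small); rewrite ltr_pM2r ?exprn_gt0 //; exact: ltW.
Qed.

(* The left side is the bound of dist_separation for the error 4 t (hi + t)
   of sqr_close; the right side bounds a product of two squared distances
   from below. *)
Lemma tolerance_bound (R : realFieldType) (lo hi t : R) :
  0 < lo -> lo <= hi -> 0 <= t -> 2000 * t * hi ^+ 3 < lo ^+ 4 ->
  (4 * t * (hi + t)) ^+ 2 + 3 * (hi + t) ^+ 2 * (4 * t * (hi + t)) < (lo - t) ^+ 4.
Proof.
move=> lo_gt0 lo_le_hi t_ge0 t_small.
have t_le := tolerance_le lo_gt0 lo_le_hi t_small.
set K := hi + t; set eta := 4 * t * K.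
have K_le : K <= 2 * hi by rewrite /K; lra.
have K_ge0 : 0 <= K by rewrite /K; lra.
have eta_ge0 : 0 <= eta by rewrite /eta !mulr_ge0.
have eta_le : eta <= 8 * t * hi.
  rewrite /eta (_ : 8 * t * hi = 4 * t * (2 * hi)); last by ring.
  by rewrite ler_wpM2l ?mulr_ge0.
have eta_le_hi2 : eta <= hi ^+ 2.
  have : 8 * t <= hi by lra.
  nra.
have K2_le : K ^+ 2 <= 4 * hi ^+ 2 by nra.
have lhs_le : eta ^+ 2 + 3 * K ^+ 2 * eta <= 13 * hi ^+ 2 * eta by nra.
have half_lo : (lo / 2) ^+ 4 <= (lo - t) ^+ 4 by rewrite lerXn2r ?nnegrE //; lra.
apply: le_lt_trans lhs_le _; apply: lt_le_trans half_lo.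
have : 13 * hi ^+ 2 * eta <= 104 * t * hi ^+ 3 by nra.
move/le_lt_trans; apply.
have -> : (lo / 2) ^+ 4 = lo ^+ 4 / 16 by field.
have : 0 <= t * hi ^+ 3 by rewrite mulr_ge0 // exprn_ge0 //; lra.
move: t_small; rewrite -!mulrA; lra.
Qed.

Section NearSideSets.
Variable R : realType.
Implicit Types p q x : pt R.

Definition orient p q x : R :=
  (q.1 - p.1) * (x.2 - p.2) - (q.2 - p.2) * (x.1 - p.1).

Lemma dist_separation p q x x' (eta K : R) :
  `|dist x p ^+ 2 - dist x' p ^+ 2| <= eta ->
  `|dist x q ^+ 2 - dist x' q ^+ 2| <= eta ->
  dist q p <= K -> dist x p <= K -> dist x' p <= K ->
  0 <= orient p q x * orient p q x' ->
  dist q p ^+ 2 * dist x x' ^+ 2 <= eta ^+ 2 + 3 * K ^+ 2 * eta.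
Proof.
have sqr_le y z : dist y z <= K -> dist y z ^+ 2 <= K ^+ 2.
  by move=> yzK; rewrite lerXn2r ?nnegrE ?dist_ge0 // (le_trans (dist_ge0 _ _) yzK).
have sqr_dist_from_p y z : dist y z ^+ 2 =
    ((y.1 - p.1) - (z.1 - p.1)) ^+ 2 + ((y.2 - p.2) - (z.2 - p.2)) ^+ 2.
  by rewrite sqr_dist; ring.
move=> xp xq qp_K xp_K x'p_K orient_ge0.
rewrite [dist q p ^+ 2]sqr_dist sqr_dist_from_p.
by apply: vector_separation; rewrite -?sqr_dist_from_p -?sqr_dist ?sqr_le.
Qed.

(* Two further points with the same side classes towards p and q and on the
   same side of the line pq would be too close to each other. *)
Lemma card_near_side_le20 (a b c t : R) m (P : 'I_m -> pt R) :
  0 < shortest_side a b c -> 0 <= t ->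
  2000 * t * longest_side a b c ^+ 3 < shortest_side a b c ^+ 4 ->
  (forall i j, i != j -> near_side a b c t (dist (P i) (P j))) -> (m <= 20)%N.
Proof.
set lo := shortest_side a b c; set hi := longest_side a b c.
move=> lo_gt0 t_ge0 t_small near.
have lo_le_hi : lo <= hi := shortest_le_longest a b c.
have t_le_lo : t <= lo by have := tolerance_le lo_gt0 lo_le_hi t_small; lra.
have dist_bounds i j : i != j -> lo - t <= dist (P i) (P j) <= hi + t.
  move=> /near [s /side_bounds /andP [lo_s s_hi]].
  rewrite -/lo -/hi in lo_s s_hi; rewrite ler_norml => /andP [? ?].
  by apply/andP; split; lra.
have [m_le2|m_gt2] := leqP m 2; first exact: leq_trans m_le2 _.
pose p : 'I_m := Ordinal (leq_trans (isT : (1 <= 3)%N) m_gt2).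
pose q : 'I_m := Ordinal (leq_trans (isT : (2 <= 3)%N) m_gt2).
have neq_pq : p != q by [].
have neq_qp : q != p by [].
pose rest := ~: [set p; q].
pose g (x : 'I_m) := (side_class a b c t (dist (P x) (P p)),
             side_class a b c t (dist (P x) (P q)), 0 <= orient (P p) (P q) (P x)).
have g_inj : {in rest &, injective g}.
  move=> x x'; rewrite !inE !negb_or => /andP [xp xq] /andP [x'p x'q].
  case=> same_p same_q same_side; have [//|xx'] := eqVneq x x'; exfalso.
  have close y : x != y -> x' != y ->
      side_class a b c t (dist (P x) (P y)) = side_class a b c t (dist (P x') (P y)) ->
      `|dist (P x) (P y) ^+ 2 - dist (P x') (P y) ^+ 2| <= 4 * t * (hi + t).
    move=> xy x'y same_class; apply: (sqr_close (dist_ge0 _ _) (dist_ge0 _ _)).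
    - by have /andP [] := dist_bounds _ _ xy.
    - by have /andP [] := dist_bounds _ _ x'y.
    - exact: side_classP (near _ _ xy).
    - by rewrite same_class; apply: side_classP (near _ _ x'y).
  have orient_ge0 : 0 <= orient (P p) (P q) (P x) * orient (P p) (P q) (P x').
    exact: same_sign_mul_ge0.
  have dist_le_hi i j : i != j -> dist (P i) (P j) <= hi + t.
    by move=> /dist_bounds /andP [].
  have separated := dist_separation (close p xp x'p same_p) (close q xq x'q same_q)
    (dist_le_hi _ _ neq_qp) (dist_le_hi _ _ xp) (dist_le_hi _ _ x'p) orient_ge0.
  have sqr_ge i j : i != j -> (lo - t) ^+ 2 <= dist (P i) (P j) ^+ 2.
    move=> /dist_bounds /andP [lo_le _].
    by rewrite lerXn2r ?nnegrE ?subr_ge0 // (le_trans _ lo_le) ?subr_ge0.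
  have lower : (lo - t) ^+ 4 <= dist (P q) (P p) ^+ 2 * dist (P x) (P x') ^+ 2.
    by rewrite -[4%N]/(2 + 2)%N exprD ler_pM ?sqr_ge0 ?sqr_ge.
  have := tolerance_bound lo_gt0 lo_le_hi t_ge0 t_small.
  by move/(le_lt_trans separated)/(le_lt_trans lower); rewrite ltxx.
have := max_card (g @: rest); rewrite (card_in_imset g_inj).
rewrite !card_prod !card_ord card_bool => rest_le.
have := cardsC [set p; q]; rewrite cards2 neq_pq card_ord => <-.
by rewrite -[20%N]/(2 + 18)%N leq_add2l.
Qed.

End NearSideSets.

Section CountingFunction.
Local Open Scope classical_set_scope.

Lemma sup_nat_attained (R : realType) (T : Type) (A : set T) (f : T -> nat) (N : nat) :
  A !=set0 -> (forall x, A x -> (f x <= N)%N) ->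
  exists2 x, A x & sup [set (f x)%:R | x in A] = (f x)%:R :> R.
Proof.
move=> [x0 Ax0] f_le.
pose P k := `[< exists2 x, A x & f x = k >].
have P_ex : exists k, P k by exists (f x0); apply/asboolP; exists x0.
have P_le k : P k -> (k <= N)%N by move=> /asboolP [x Ax <-]; apply: f_le.
case: (ex_maxnP P_ex P_le) => k /asboolP [x Ax fx] k_max.
exists x => //; apply/le_anti/andP; split.
  apply: ge_sup; first by exists (f x0)%:R, x0.
  by move=> _ [y Ay <-]; rewrite fx ler_nat k_max //; apply/asboolP; exists y.
apply: ub_le_sup; last by exists x.
by exists N%:R => _ [y Ay <-]; rewrite ler_nat f_le.
Qed.

Variables (R : realType) (a b c : R) (n : nat).

Lemma h_eps_attained eps : exists2 Q : 'I_n -> pt R, injective Q &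
  h_eps n a b c eps = (count_cong a b c eps Q)%:R.
Proof.
apply: (@sup_nat_attained R _ _ _ #|{: 'I_n * 'I_n * 'I_n}|) => [|Q _]; last exact: max_card.
exists (fun i : 'I_n => ((i : nat)%:R, 0)) => i j [] /eqP.
by rewrite eqr_nat => /eqP /val_inj.
Qed.

Lemma h_T_le_h_eps eps : 0 < eps -> h_T n a b c <= h_eps n a b c eps.
Proof.
move=> eps_gt0; apply: ge_inf; last by exists eps.
by exists 0 => _ [e _ <-]; have [Q _ ->] := h_eps_attained e.
Qed.

Lemma count_cong_lagpoly eps (Q : 'I_n -> pt R) : (0 < n)%N ->
  (count_cong a b c eps Q)%:R = n%:R ^+ 3 * lagpoly (Hedge a b c eps Q) (fun=> n%:R^-1) :> R.
Proof.
move=> n_gt0; rewrite lagpoly_uniform //; congr _%:R; apply: eq_card => t.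
by rewrite unfold_in asboolb finset.inE.
Qed.

End CountingFunction.

Theorem lemma3p1 (R : realType) (a b c : R) (n : nat) :
  is_triangle a b c -> (0 < n)%N ->
  exists eps0 : R, 0 < eps0 /\
    forall eps : R, 0 < eps -> eps < eps0 ->
      exists (m : nat) (P : 'I_m -> pt R),
        [/\ (m <= 20)%N, injective P,
            shadow_complete a b c eps P &
            h_T n a b c <= (n%:R) ^+ 3 * lagrangian a b c eps P].
Proof.
move=> [a_gt0 b_gt0 c_gt0 _] n_gt0.
set lo := shortest_side a b c; set hi := longest_side a b c.
have lo_gt0 : 0 < lo by rewrite /lo /shortest_side !lt_min a_gt0 b_gt0 c_gt0.
have lo_le_hi : lo <= hi := shortest_le_longest a b c.
have hi_gt0 : 0 < hi := lt_le_trans lo_gt0 lo_le_hi.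
exists (lo ^+ 3 / (4000 * hi ^+ 3)); split; first by rewrite divr_gt0 ?mulr_gt0 ?exprn_gt0.
move=> eps eps_gt0 eps_small.
have t_small : 2000 * (2 * (eps * lo)) * hi ^+ 3 < lo ^+ 4.
  move: eps_small; rewrite ltr_pdivlMr ?mulr_gt0 ?exprn_gt0 // => h.
  rewrite (_ : 2000 * _ * _ = lo * (eps * (4000 * hi ^+ 3))); last by ring.
  by rewrite exprS ltr_pM2l.
have [Q Q_inj hQ] := h_eps_attained a b c n eps.
have [y [y_simplex le_uniform_y y_closed]] := exists_closed_support
  (@Hedge_swap12 _ a b c eps _ Q) (@Hedge_swap23 _ a b c eps _ Q) (uniform_in_simplex R n_gt0).
have [m [P [P_inj P_shadow le_y_lagrangian]]] := restrict_to_support Q_inj y_simplex y_closed.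
exists m, P; split=> //.
  apply: (card_near_side_le20 lo_gt0 _ t_small) => [|i j].
    by rewrite !mulr_ge0 // ltW.
  exact: shadow_complete_near_side P_shadow.
apply: le_trans (h_T_le_h_eps a b c n eps_gt0) _.
rewrite hQ count_cong_lagpoly // ler_wpM2l ?exprn_ge0 ?ler0n //.
exact: le_trans le_uniform_y le_y_lagrangian.
Qed.
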